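(* Let $n$ be a positive odd integer and let $G$ be a finite group. Then $P_e(G)\cong P_e(Q_8\times\mathbb{Z}_n)$ if and only if $G\cong Q_8\times\mathbb{Z}_n$.
   Context: All groups are finite. $Q_8$ is the quaternion group of order $8$ and $\mathbb{Z}_n$ the cyclic group of order $n$. For a group $X$, the enhanced power graph $P_e(X)$ is the simple graph with vertex set $X$ in which two distinct vertices $x,y$ are adjacent if and only if $\langle x,y\rangle$ is cyclic. *)

From HB Require Import structures.
From mathcomp Require Import all_boot all_order all_algebra all_fingroup all_solvable.
Set Implicit Arguments. Unset Strict Implicit. Unset Printing Implicit Defensive.
Import GroupScope.

Definition epg_adj (gT : finGroupType) (x y : gT) : bool :=
  (x != y) && cyclic <<[set x; y]>>.

Definition epg_iso (gT hT : finGroupType) (G : {set gT}) (H : {set hT}) : Prop :=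
  exists f : gT -> hT,
    [/\ {in G &, injective f}, f @: G = H &
        {in G &, forall x y, epg_adj (f x) (f y) = epg_adj x y}].

(* Q_8 x Z_n as an external direct product; Zp n is the cyclic group of order n
   (for n >= 1). *)
Definition Q8xZ (n : nat) : {group (gsort 'Q_8 * 'Z_n)%type} :=
  setX_group 'Q_8%G (Zp_group n).

From mathcomp Require Import all_boot all_order all_algebra all_fingroup all_solvable.

Set Implicit Arguments. Unset Strict Implicit. Unset Printing Implicit Defensive.
Import GroupScope.

(* In [Q_8 x Z_n], n odd, every vertex outside [D = Z(Q_8) x Z_n] has as closed
   neighbourhood the cyclic subgroup [<q> x Z_n] of order [4n], and [D] is the
   intersection of two such neighbourhoods.  These facts only involve the graph,
   so a group [G] with an isomorphic enhanced power graph inherits them.  A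
   closed neighbourhood that is a clique is a cyclic subgroup, hence [D = <d>]
   with [#[d] = 2n] and every element of [G] lies in a cyclic subgroup of order
   [4n] containing [d].  Then [d] is central, [d ^+ n] is the only involution of
   [G], a Sylow 2-subgroup [P] is a non-cyclic group of order 8 with a unique
   involution, i.e. [Q_8], and [G = P x <d ^+ 2>]. *)

Section EnhancedPowerGraph.

Variable gT : finGroupType.
Implicit Types (x y z : gT) (G : {group gT}).

Definition cyclic_pair x y := cyclic <<[set x; y]>>.

Definition epg_nbhd (A : {set gT}) x := [set y in A | cyclic_pair x y].

Lemma cyclic_pair_refl x : cyclic_pair x x.
Proof. by rewrite /cyclic_pair setUid cycle_cyclic. Qed.

Lemma cyclic_pairW (C : {group gT}) x y :
  cyclic C -> x \in C -> y \in C -> cyclic_pair x y.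
Proof.
by move=> cycC Cx Cy; apply: cyclicS cycC; rewrite gen_subG subUset !sub1set Cx.
Qed.

Lemma cyclic_pairP x y :
  reflect (exists h, [/\ x \in <[h]>, y \in <[h]> & h \in <<[set x; y]>>])
          (cyclic_pair x y).
Proof.
apply: (iffP idP) => [/cyclicP[h defh] | [h [xh yh _]]].
  by exists h; rewrite defh cycle_id -defh !mem_gen ?inE ?eqxx ?orbT.
exact: cyclic_pairW (cycle_cyclic h) xh yh.
Qed.

Lemma cycle_sub_epg_nbhd G z h :
  h \in G -> z \in <[h]> -> <[h]> \subset epg_nbhd G z.
Proof.
move=> Gh zh; apply/subsetP => y yh.
have sGh : <[h]> \subset G by rewrite cycle_subG.
by rewrite inE (subsetP sGh) // (cyclic_pairW (cycle_cyclic h)).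
Qed.

(* A cyclic subgroup of maximal order among those containing [z] and contained
   in the clique must be the whole clique. *)
Lemma epg_nbhd_cycle G z :
  z \in G -> {in epg_nbhd G z &, forall x y, cyclic_pair x y} ->
  exists2 c, c \in G & <[c]> = epg_nbhd G z.
Proof.
move=> Gz clique; set S := epg_nbhd G z.
have sSG : S \subset G by apply/subsetP => y /setIdP[].
pose P c := (z \in <[c]>) && (<[c]> \subset S).
have Pz : P z by rewrite /P cycle_id cycle_sub_epg_nbhd ?cycle_id.
have [c /andP[zc scS] maxc] := arg_maxnP (fun c => #[c]) Pz.
have Gc : c \in G by rewrite (subsetP sSG) // (subsetP scS) ?cycle_id.
exists c => //; apply/eqP; rewrite eqEsubset scS; apply/subsetP => y Sy.
have Sc : c \in S by rewrite (subsetP scS) ?cycle_id.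
have /cyclic_pairP[h [ch yh hcy]] := clique c y Sc Sy.
have Gh : h \in G.
  by rewrite (subsetP _ h hcy) // gen_subG subUset !sub1set Gc (subsetP sSG).
have sch : <[c]> \subset <[h]> by rewrite cycle_subG.
have Ph : P h by rewrite /P (subsetP sch) // cycle_sub_epg_nbhd // (subsetP sch).
suff -> : <[c]> = <[h]> by [].
by apply/eqP; rewrite eqEcard sch -!orderE; apply: maxc.
Qed.

End EnhancedPowerGraph.

Section Morphisms.

Variables (gT hT : finGroupType) (D : {group gT}) (f : {morphism D >-> hT}).

Lemma morphim_gen_set2 x y :
  x \in D -> y \in D -> f @* <<[set x; y]>> = <<[set f x; f y]>>.
Proof.
move=> Dx Dy; have sxyD : [set x; y] \subset D by rewrite subUset !sub1set Dx.
by rewrite morphim_gen // morphimEsub // imsetU1 imset_set1.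
Qed.

Lemma cyclic_pair_morph x y :
  x \in D -> y \in D -> cyclic_pair x y -> cyclic_pair (f x) (f y).
Proof.
by move=> Dx Dy; rewrite /cyclic_pair -morphim_gen_set2 //; apply: morphim_cyclic.
Qed.

Lemma cyclic_pair_injm x y :
  'injm f -> x \in D -> y \in D -> cyclic_pair (f x) (f y) = cyclic_pair x y.
Proof.
move=> injf Dx Dy; rewrite /cyclic_pair -morphim_gen_set2 // injm_cyclic //.
by rewrite gen_subG subUset !sub1set Dx.
Qed.

End Morphisms.

Lemma isog_epg_iso (gT hT : finGroupType) (G : {group gT}) (H : {group hT}) :
  G \isog H -> epg_iso G H.
Proof.
case/isogP => f injf fG; exists f; split; first exact/injmP.
  by rewrite -morphimEdom.
move=> x y Gx Gy; rewrite /epg_adj (inj_in_eq (injmP injf)) //.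
by congr (_ && _); apply: cyclic_pair_injm.
Qed.

(* In [Q_8 x Z_n] this holds with [D = Z(Q_8) x Z_n]; being stated in terms of
   the graph alone, it transfers along [epg_iso]. *)
Definition Q8xZ_shape (gT : finGroupType) (G : {set gT}) n (D : {set gT}) :=
  [/\ #|D| = (2 * n)%N,
      {in G :\: D, forall g,
        [/\ {in epg_nbhd G g &, forall x y, cyclic_pair x y},
            #|epg_nbhd G g| = (4 * n)%N & D \subset epg_nbhd G g]}
    & exists2 g1, g1 \in G :\: D &
      exists2 g2, g2 \in G :\: D & epg_nbhd G g1 :&: epg_nbhd G g2 = D].

Section GraphIsomorphism.

Variables (gT hT : finGroupType) (G : {set gT}) (H : {set hT}) (f : gT -> hT).
Hypotheses (f_inj : {in G &, injective f}) (f_onto : f @: G = H)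
  (f_adj : {in G &, forall x y, epg_adj (f x) (f y) = epg_adj x y}).

Lemma mem_epg_iso x : x \in G -> f x \in H.
Proof. by move=> Gx; rewrite -f_onto imset_f. Qed.

Lemma cyclic_pair_epg_iso :
  {in G &, forall x y, cyclic_pair (f x) (f y) = cyclic_pair x y}.
Proof.
move=> x y Gx Gy; have [<-|neq_xy] := eqVneq x y; first by rewrite !cyclic_pair_refl.
have := f_adj Gx Gy; rewrite /epg_adj neq_xy (inj_in_eq f_inj) //.
by rewrite neq_xy.
Qed.

Lemma epg_nbhd_epg_iso x :
  x \in G -> epg_nbhd G x = [set y in G | f y \in epg_nbhd H (f x)].
Proof.
move=> Gx; apply/setP => y; rewrite !inE.
by case Gy: (y \in G); rewrite //= mem_epg_iso // cyclic_pair_epg_iso.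
Qed.

Lemma card_preim_epg_iso (S : {set hT}) :
  S \subset H -> #|[set y in G | f y \in S]| = #|S|.
Proof.
move=> sSH; set T := [set y in G | f y \in S].
have injT : {in T &, injective f} by apply: sub_in2 f_inj => y /setIdP[].
suff <- : f @: T = S by rewrite card_in_imset.
apply/setP => u; apply/imsetP/idP => [[y /setIdP[_ Sfy] ->] // | Su].
have /imsetP[y Gy eq_u] : u \in f @: G by rewrite f_onto (subsetP sSH).
by exists y; rewrite // inE Gy -eq_u.
Qed.

Lemma Q8xZ_shape_epg_iso n D :
  Q8xZ_shape H n D -> Q8xZ_shape G n [set y in G | f y \in D].
Proof.
move=> [oD nbhdD [u1 Du1 [u2 Du2 defD]]].
have sDH : D \subset H.
  by rewrite -defD; apply/subsetP => u /setIP[/setIdP[]].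
have nbhdE y : y \in G :\: [set y in G | f y \in D] -> f y \in H :\: D.
  by case/setDP=> Gy; rewrite inE Gy => Dfy; rewrite inE Dfy mem_epg_iso.
split; first by rewrite card_preim_epg_iso.
- move=> y Dy; have [Gy _] := setDP Dy.
  have [clique onbhd sDnbhd] := nbhdD _ (nbhdE y Dy).
  rewrite epg_nbhd_epg_iso // card_preim_epg_iso; last first.
    by apply/subsetP => u /setIdP[].
  split=> //; last first.
    by apply/subsetP => z /setIdP[Gz Dfz]; rewrite inE Gz (subsetP sDnbhd).
  move=> z t /setIdP[Gz nz] /setIdP[Gt nt].
  by rewrite -cyclic_pair_epg_iso // clique.
have preim u :
    u \in H :\: D -> exists2 y, y \in G :\: [set y in G | f y \in D] & f y = u.
  case/setDP=> Hu Du; have /imsetP[y Gy eq_u] : u \in f @: G by rewrite f_onto.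
  by exists y; rewrite // inE Gy inE Gy -eq_u Du.
have [g1 Dg1 fg1] := preim u1 Du1; have [g2 Dg2 fg2] := preim u2 Du2.
exists g1 => //; exists g2 => //.
have [[Gg1 _] [Gg2 _]] := (setDP Dg1, setDP Dg2).
rewrite !epg_nbhd_epg_iso // -defD fg1 fg2; apply/setP => y; rewrite !inE.
by case: (y \in G).
Qed.

End GraphIsomorphism.

Lemma epg_iso_card (gT hT : finGroupType) (G : {set gT}) (H : {set hT}) :
  epg_iso G H -> #|G| = #|H|.
Proof. by case=> f [injf <- _]; rewrite card_in_imset. Qed.

Lemma epg_iso_Q8xZ_shape (gT hT : finGroupType) (G : {set gT}) (H : {set hT}) n D :
  epg_iso G H -> Q8xZ_shape H n D -> exists D', Q8xZ_shape G n D'.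
Proof.
case=> f [injf onto adj] /(Q8xZ_shape_epg_iso injf onto adj) shapeG.
by exists [set y in G | f y \in D].
Qed.

Section Quaternion8.

Implicit Types q c u : 'Q_8.

Lemma Q8_generators : exists x y : 'Q_8,
  [/\ #[x] = 4, y \notin <[x]>, {in 'Q_8 :\: <[x]>, forall t, #[t] = 4},
      'Z('Q_8) = <[x ^+ 2]> & forall u, #[u] = 2 -> u = x ^+ 2].
Proof.
have [[x y] genQ _] := @generators_quaternion _ 'Q_8%G 3 isT (isog_refl _).
have [[_ ord4 _] _ [defZ _ invol _ _] _ _] :=
  quaternion_structure (n := 3) isT genQ (isog_refl _).
have [_ _ ox /setDP[_ notxy]] := genQ.
by exists x, y; split=> // u /(invol u (in_setT u)).
Qed.

Lemma Q8_order_dvd4 q : #[q] %| 4.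
Proof.
have [x [_ [ox _ ord4 _ _]]] := Q8_generators.
have [xq | notxq] := boolP (q \in <[x]>).
  by have := order_dvdG xq; rewrite -orderE ox.
by rewrite ord4 // !inE notxq.
Qed.

Lemma card_Q8_center : #|'Z('Q_8)| = 2.
Proof.
by have [x [_ [ox _ _ -> _]]] := Q8_generators; rewrite -orderE orderXdiv ox.
Qed.

Lemma Q8_involution_center u : #[u] = 2 -> u \in 'Z('Q_8).
Proof.
by have [x [_ [_ _ _ -> invol]]] := Q8_generators; move/invol->; rewrite cycle_id.
Qed.

Lemma Q8_order_noncentral q : q \notin 'Z('Q_8) -> #[q] = 4.
Proof.
move=> notZq; have := Q8_order_dvd4 q; have := order_gt0 q.
case oq: #[q] => [|[|[|[|[|k]]]]] // _ _.
  by move/eqP: oq; rewrite order_eq1 => /eqP q1; rewrite q1 group1 in notZq.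
by rewrite Q8_involution_center in notZq.
Qed.

Lemma Q8_center_sub_cycle q : q \notin 'Z('Q_8) -> 'Z('Q_8) \subset <[q]>.
Proof.
move=> notZq; have [x [_ [_ _ _ defZ invol]]] := Q8_generators.
have oq2 : #[q ^+ 2] = 2 by rewrite orderXdiv Q8_order_noncentral.
by rewrite defZ -(invol _ oq2) cycleX.
Qed.

Lemma Q8_cycle_max q c : q \notin 'Z('Q_8) -> q \in <[c]> -> <[c]> = <[q]>.
Proof.
move=> notZq cq; apply/eqP; rewrite eq_sym eqEcard cycle_subG cq.
by rewrite -!orderE (Q8_order_noncentral notZq) dvdn_leq ?Q8_order_dvd4.
Qed.

Lemma Q8_cycleI : exists q1 q2 : 'Q_8,
  [/\ q1 \notin 'Z('Q_8), q2 \notin 'Z('Q_8) & <[q1]> :&: <[q2]> = 'Z('Q_8)].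
Proof.
have [x [y [ox notxy _ defZ _]]] := Q8_generators.
have notZx : x \notin 'Z('Q_8).
  by apply: contraL isT => Zx; have := order_dvdG Zx; rewrite card_Q8_center ox.
have notZy : y \notin 'Z('Q_8).
  by apply: contra notxy; apply/subsetP/Q8_center_sub_cycle.
exists x, y; split=> //; apply/eqP; rewrite eqEsubset subsetI.
rewrite !Q8_center_sub_cycle // !andbT; apply/subsetP => q /setIP[xq yq].
apply: contraR notxy => notZq.
by rewrite (Q8_cycle_max notZq xq) -(Q8_cycle_max notZq yq) cycle_id.
Qed.

End Quaternion8.

Lemma cyclic_Zp n : cyclic (Zp n).
Proof.
rewrite /Zp; case: ifP => _; last exact: cyclic1.
by rewrite Zp_cycle cycle_cyclic.
Qed.

Lemma setXIl (T1 T2 : finType) (A B : {set T1}) (C : {set T2}) :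
  setX A C :&: setX B C = setX (A :&: B) C.
Proof. by apply/setP => -[a c]; rewrite !inE andbACA andbb. Qed.

Section QuaternionTimesCyclic.

Variable n : nat.
Hypothesis odd_n : odd n.

Let n_gt0 : 0 < n. Proof. exact: odd_gt0. Qed.

Lemma card_Q8xZ : #|Q8xZ n| = (8 * n)%N.
Proof. by rewrite cardsX (card_quaternion (n := 3)) ?card_Zp. Qed.

Lemma cyclic_cycle_setX_Zp (c : 'Q_8) : cyclic (setX_group <[c]> (Zp_group n)).
Proof.
rewrite (cyclic_dprod (setX_dprod <[c]>%G (Zp_group n))).
- rewrite -(card_isog (isog_setX1 _ _)) -(card_isog (isog_set1X _ _)) /=.
  rewrite -orderE card_Zp //; apply: coprime_dvdl (Q8_order_dvd4 c) _.
  by rewrite (coprimeXl 2 (_ : coprime 2 n)) // coprime2n odd_n.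
- by rewrite -(isog_cyclic (isog_setX1 _ _)) cycle_cyclic.
by rewrite -(isog_cyclic (isog_set1X _ _)) cyclic_Zp.
Qed.

Lemma epg_nbhd_Q8xZ h :
  h \in Q8xZ n -> h.1 \notin 'Z('Q_8) -> epg_nbhd (Q8xZ n) h = setX <[h.1]> (Zp n).
Proof.
case: h => q w /setXP[_ Zw] /= notZq; apply/setP => -[a b]; rewrite !inE /=.
apply/andP/andP => [[Zb /(cyclic_pair_morph [morphism of @fst _ _])] | [qa Zb]].
  rewrite !inE => /(_ isT isT)/cyclic_pairP[g [qg ag _]].
  by rewrite -(Q8_cycle_max notZq qg) ag.
split=> //; apply: cyclic_pairW (cyclic_cycle_setX_Zp q) _ _.
  by rewrite !inE cycle_id.
by rewrite !inE qa Zb.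
Qed.

Lemma Q8xZ_shape_Q8xZ : Q8xZ_shape (Q8xZ n) n (setX 'Z('Q_8) (Zp n)).
Proof.
have notZ h : h \in Q8xZ n :\: setX 'Z('Q_8) (Zp n) -> h.1 \notin 'Z('Q_8).
  by case: h => q w /setDP[/setXP[_ Zw]]; rewrite in_setX Zw andbT.
split; first by rewrite cardsX card_Q8_center card_Zp.
  move=> h Dh; have [Hh _] := setDP Dh; rewrite epg_nbhd_Q8xZ ?notZ //.
  split; first by move=> x y; apply: cyclic_pairW (cyclic_cycle_setX_Zp _).
    by rewrite cardsX -orderE Q8_order_noncentral ?notZ ?card_Zp.
  by rewrite setXS ?Q8_center_sub_cycle ?notZ.
have [q1 [q2 [notZq1 notZq2 defZ]]] := Q8_cycleI.
have inD q : q \notin 'Z('Q_8) -> (q, 1) \in Q8xZ n :\: setX 'Z('Q_8) (Zp n).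
  by move=> notZq; rewrite in_setD !in_setX (negbTE notZq) in_setT group1.
exists (q1, 1); first exact: inD.
exists (q2, 1); first exact: inD.
by rewrite !epg_nbhd_Q8xZ ?notZ ?inD //= ?setXIl ?defZ // in_setX in_setT group1.
Qed.

End QuaternionTimesCyclic.

Section GroupStructure.

Variable gT : finGroupType.
Implicit Types (G N P : {group gT}) (c d u v : gT).

Lemma cycle_involution_eq c u v :
  u \in <[c]> -> v \in <[c]> -> #[u] = 2 -> #[v] = 2 -> u = v.
Proof.
move=> cu cv ou ov; have eq_uv : <[u]> = <[v]>.
  by apply/eqP; rewrite (eq_subG_cyclic (cycle_cyclic c)) ?cycle_subG // -!orderE ou ov.
have : u \in <[v]> by rewrite -eq_uv cycle_id.
rewrite cycle2g // !inE => /orP[/eqP u1 | /eqP //].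
by move: ou; rewrite u1 order1.
Qed.

Lemma isog_Q8_unique_involution P :
  #|P| = 8 -> ~~ cyclic P -> {in P &, forall u v, #[u] = 2 -> #[v] = 2 -> u = v} ->
  P \isog 'Q_8.
Proof.
move=> oP ncycP invol; have pP : 2.-group P by rewrite /pgroup oP.
have [t Pt ot] : {t | t \in P & #[t] = 2} by apply: Cauchy; rewrite ?oP.
have sOt : 'Ohm_1(P) \subset <[t]>.
  rewrite (OhmE 1 pP) gen_subG; apply/subsetP => x /LdivP[Px x2].
  have [/eqP | ntx] := eqVneq #[x] 1%N; first by rewrite order_eq1 => /eqP->.
  have ox : #[x] = 2 by apply/(@prime_nt_dvdP _ 2 isT ntx); rewrite order_dvdn x2.
  by rewrite (invol x t) ?cycle_id.
have ntP : P :!=: 1 by rewrite trivg_card1 oP.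
have oO : #|'Ohm_1(P)| = 2.
  have ntO : #|'Ohm_1(P)| != 1%N by rewrite -trivg_card1 Ohm1_eq1.
  by apply/(@prime_nt_dvdP _ 2 isT ntO); rewrite -ot orderE cardSg.
have /(prime_Ohm1P pP ntP)/orP[cycP | /andP[_ /eqP/quaternion_classP[m m_gt2 isoP]]]
  := oO; first by rewrite cycP in ncycP.
suff m3 : m = 3 by rewrite m3 in isoP.
by apply/eqP; rewrite -(@eqn_exp2l 2) // -(card_quaternion m_gt2) -(card_isog isoP) oP.
Qed.

Lemma Sylow2_dprod_central G N n :
  odd n -> #|G| = (8 * n)%N -> N \subset G -> N \subset 'C(G) -> #|N| = n ->
  exists2 P : {group gT}, #|P| = 8 & P \x N = G.
Proof.
move=> odd_n oG sNG cNG oN; have [P sylP] := Sylow_exists 2 G.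
have oP : #|P| = 8.
  rewrite (card_Hall sylP) oG partnM ?(odd_gt0 odd_n) // part_pnat_id // part_p'nat //.
  by rewrite p'natE // dvdn2 odd_n.
have sPG : P \subset G := pHall_sub sylP.
have coPN : coprime #|P| #|N|.
  by rewrite oP oN (coprimeXl 3 (_ : coprime 2 n)) // coprime2n odd_n.
exists P => //; rewrite dprodE ?coprime_TIg ?(subset_trans cNG (centS sPG)) //.
by apply/eqP; rewrite eqEcard mul_subG //= TI_cardMg ?coprime_TIg // oP oN oG.
Qed.

Lemma isog_Q8xZ_dprod G P N n :
  P \x N = G -> P \isog 'Q_8 -> cyclic N -> #|N| = n -> G \isog Q8xZ n.
Proof.
move=> defG isoP cycN oN; apply: isog_dprod defG (setX_dprod _ _) _ _.
  exact: isog_trans isoP (isog_setX1 _ _).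
apply: isog_trans (isog_set1X _ _).
by rewrite -oN isog_cyclic_card // cyclic_Zp card_Zp ?cardG_gt0 ?eqxx.
Qed.

End GroupStructure.

Section Recognition.

Variables (gT : finGroupType) (G : {group gT}) (n : nat).
Hypotheses (odd_n : odd n) (oG : #|G| = (8 * n)%N).

Lemma isog_Q8xZ_cycle_cover d :
  d \in G -> #[d] = (2 * n)%N ->
  {in G, forall a, exists c, [/\ a \in <[c]>, d \in <[c]> & #[c] = (4 * n)%N]} ->
  G \isog Q8xZ n.
Proof.
move=> Gd od cover.
have cGd : d \in 'C(G).
  apply/centP => a Ga; have [c [ac dc _]] := cover a Ga.
  exact: (centsP (cycle_abelian c)).
pose N := <[d ^+ 2]>.
have oN : #|N| = n by rewrite -orderE orderXdiv od ?dvdn_mulr // mulKn.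
have sNG : N \subset G by rewrite cycle_subG groupX.
have cNG : N \subset 'C(G) by rewrite cycle_subG groupX.
have [P oP defG] := Sylow2_dprod_central odd_n oG sNG cNG oN.
have sPG : P \subset G by rewrite -(dprodW defG) mulG_subl.
have ot : #[d ^+ n] = 2 by rewrite orderXdiv od ?dvdn_mull // mulnK ?odd_gt0.
have invol : {in G, forall u, #[u] = 2 -> u = d ^+ n}.
  move=> u Gu ou; have [c [uc dc _]] := cover u Gu.
  exact: cycle_involution_eq uc (groupX _ dc) ou ot.
have ncycP : ~~ cyclic P.
  apply/cyclicP => -[p defP]; have Gp : p \in G by rewrite (subsetP sPG) // defP cycle_id.
  have [c [pc _ oc]] := cover p Gp; have := order_dvdG pc.
  rewrite (orderE p) -defP oP -orderE oc (_ : 8 = 4 * 2)%N // dvdn_pmul2l //.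
  by rewrite dvdn2 odd_n.
apply: isog_Q8xZ_dprod defG _ (cycle_cyclic _) oN.
apply: isog_Q8_unique_involution oP ncycP _ => u v Pu Pv ou ov.
by rewrite (invol u (subsetP sPG u Pu) ou) (invol v (subsetP sPG v Pv) ov).
Qed.

Lemma Q8xZ_shape_isog D : Q8xZ_shape G n D -> G \isog Q8xZ n.
Proof.
move=> [oD nbhdD [g1 Dg1 [g2 Dg2 defD]]].
have nbhd_cycle g : g \in G :\: D ->
    exists c, [/\ <[c]> = epg_nbhd G g, #[c] = (4 * n)%N & D \subset <[c]>].
  move=> Dg; have [Gg] := setDP Dg; have [clique onbhd sDnbhd] := nbhdD g Dg.
  by have [c _ defc] := epg_nbhd_cycle Gg clique; exists c; rewrite orderE defc.
have [c1 [def1 _ sD1]] := nbhd_cycle g1 Dg1.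
have [c2 [def2 _ _]] := nbhd_cycle g2 Dg2.
have /cyclicP[d defd] : cyclic (<[c1]> :&: <[c2]>).
  by rewrite (cyclicS (subsetIl _ _)) ?cycle_cyclic.
have {defD}defD : D = <[d]> by rewrite -defD -def1 -def2.
subst D.
have /setIdP[Gd _] : d \in epg_nbhd G g1 by rewrite -def1 (subsetP sD1) ?cycle_id.
apply: (isog_Q8xZ_cycle_cover Gd) => [|a Ga]; first by rewrite orderE.
have [Da | notDa] := boolP (a \in <[d]>).
  have [c [_ oc sDc]] := nbhd_cycle g1 Dg1.
  by exists c; split; rewrite // (subsetP sDc) ?cycle_id.
have DGa : a \in G :\: <[d]> by rewrite inE notDa.
have [c [defc oc sDc]] := nbhd_cycle a DGa.
by exists c; rewrite defc inE Ga cyclic_pair_refl -defc (subsetP sDc) ?cycle_id.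
Qed.

End Recognition.

Theorem theorem5 (n : nat) (gT : finGroupType) (G : {group gT}) :
  0 < n -> odd n ->
  (epg_iso G (Q8xZ n) <-> G \isog Q8xZ n).
Proof.
move=> _ odd_n; split=> [isoG | /isog_epg_iso //].
have [D shapeG] := epg_iso_Q8xZ_shape isoG (Q8xZ_shape_Q8xZ odd_n).
apply: Q8xZ_shape_isog shapeG => //.
by rewrite (epg_iso_card isoG) card_Q8xZ.
Qed.
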